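(* For any $\alpha\in(0,1)$, any $f\in\mathcal V_1$ and any $x>0$, $$c(f)\le\frac{1+2\alpha}{3(1-\alpha)}\,c_{1,\alpha}\,\big(1-f(x)\big)^{\min(1-\alpha,\alpha)}\big(1+x^{-2\alpha}\big).$$
   Context: Fix $\alpha\in(0,1)$ and set $c_{1,\alpha}=\frac{2^{2\alpha-1}\Gamma(\frac12+\alpha)}{\sqrt{\pi}\,\Gamma(1-\alpha)}$. Let $\rho(x)=(1+|x|)^{-\alpha}$ and $\mathcal V_0=\{f\in C(\mathbb{R}): f\text{ even},\ \|\rho f\|_{L^\infty}<\infty\}$. Let $\eta=2\left(\frac{3}{2(3-2\alpha)(5-2\alpha)(1+4^{\alpha})}\right)^{1/\min(\alpha,1-\alpha)}$. $\mathcal V_1$ is the set of $f\in\mathcal V_0$ such that $f(0)=1$; $f\ge0$ and $f$ is non-increasing on $[0,\infty)$; $x\mapsto f(\sqrt x)$ is convex on $[0,\infty)$; $f(x)\ge\max(0,1-x^2)$ for all $x$; and $f'_-(1/2)\le-\eta$. For $f\in\mathcal V_1$, $c(f)=\frac{2\alpha(1+2\alpha)}{3}c_{1,\alpha}\int_0^\infty\frac{1-f(\xi)}{\xi^{1+2\alpha}}\,d\xi$. *)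

From HB Require Import structures.
From mathcomp Require Import all_boot all_order all_algebra.
From mathcomp Require Import all_classical all_reals all_analysis.
Set Implicit Arguments. Unset Strict Implicit. Unset Printing Implicit Defensive.
Import Order.TTheory GRing.Theory Num.Theory.
Import numFieldNormedType.Exports.
Local Open Scope classical_set_scope.
Local Open Scope ring_scope.

Section Defs.
Variable R : realType.

(* Euler Gamma function Γ(s) = ∫_0^∞ t^(s-1) e^(-t) dt (Lebesgue integral);
   only used for s > 0, where the integral is finite. *)
Definition Gamma (s : R) : R :=
  fine (\int[lebesgue_measure]_(t in `]0%R, +oo[) ((t `^ (s - 1)) * expR (- t))%:E)%E.

Definition c1 (a : R) : R :=
  2 `^ (2 * a - 1) * Gamma (2^-1 + a) / (Num.sqrt pi * Gamma (1 - a)).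

Definition rho (a : R) (x : R) : R := (1 + `|x|) `^ (- a).

Definition eta (a : R) : R :=
  2 * (3 / (2 * (3 - 2 * a) * (5 - 2 * a) * (1 + 4 `^ a)))
        `^ (1 / Num.min a (1 - a)).

Definition V0 (a : R) (f : R -> R) : Prop :=
  continuous f /\ (forall x, f (- x) = f x) /\
  exists M : R, forall x, `|rho a x * f x| <= M.

Definition V1 (a : R) (f : R -> R) : Prop :=
  V0 a f /\
  [/\ f 0 = 1,
      ((forall x, 0 <= f x) /\ (forall x y, 0 <= x -> x <= y -> f y <= f x)),
      convex_function (`[0%R, +oo[%classic : set R^o) (fun x : R^o => f (Num.sqrt x) : R^o),
      (forall x, Num.max 0 (1 - x ^+ 2) <= f x) &
      (exists L : R,
        (fun h : R => (f (2^-1 + h) - f 2^-1) / h) @ 0^'- --> L /\ L <= - eta a)].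

(* c(f), as an extended real (it is finite for f in V_1) *)
Definition cf (a : R) (f : R -> R) : \bar R :=
  ((2 * a * (1 + 2 * a) / 3 * c1 a)%:E *
   \int[lebesgue_measure]_(xi in `]0%R, +oo[)
      ((1 - f xi) / xi `^ (1 + 2 * a))%:E)%E.

End Defs.

(* With d := 1 - f x, the shape constraints defining V1 control the deficit
   1 - f(xi) on four ranges: it is at most xi^2 (from f >= 1 - x^2), at most
   d for xi <= x (monotonicity), at most d xi^2 / x^2 for xi >= x (convexity
   of f o sqrt, i.e. the slope (1 - f xi) / xi^2 decreases), and at most 1.
   Integrating these bounds against xi^(-1-2a) on (0, s], (s, x], (x, y] and
   (y, oo) with s = sqrt d and y = x / sqrt d gives
   int_0^oo (1 - f xi) / xi^(1+2a) <= (d^(1-a) + x^(-2a) d^a) / (2a(1-a)),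
   and d^(1-a), d^a <= d^min(a,1-a) since 0 <= d <= 1. *)

From HB Require Import structures.
From mathcomp Require Import all_boot all_order all_algebra.
From mathcomp Require Import all_classical all_reals all_analysis.
From mathcomp Require Import measurable_realfun.
From mathcomp.algebra_tactics Require Import ring lra.
Set Implicit Arguments.
Unset Strict Implicit.
Unset Printing Implicit Defensive.
Import Order.TTheory GRing.Theory Num.Theory.
Import numFieldNormedType.Exports.
Local Open Scope classical_set_scope.
Local Open Scope ring_scope.

Section integral_bounds.
Context d (T : measurableType d) (R : realType) (mu : {measure set T -> \bar R}).

Lemma ge0_le_integral_scale_subset (D E : set T) (g h : T -> R) (k : R) :
  measurable D -> measurable E -> D `<=` E ->
  measurable_fun D g -> measurable_fun E h -> (forall y, E y -> 0 <= h y) ->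
  0 <= k -> (forall y, D y -> 0 <= g y <= k * h y) ->
  (\int[mu]_(y in D) (g y)%:E <= k%:E * \int[mu]_(y in E) (h y)%:E)%E.
Proof.
move=> mD mE DE mg mh h0 k0 gkh.
have mhD : measurable_fun D h := measurable_funS mE DE mh.
apply: (@le_trans _ _ (\int[mu]_(y in D) (k * h y)%:E)%E).
  apply: ge0_le_integral => //.
  - by move=> y Dy; rewrite lee_fin; case/andP: (gkh y Dy).
  - exact/measurable_EFinP.
  - by apply/measurable_EFinP; apply: measurable_funM.
  - by move=> y Dy; rewrite lee_fin; case/andP: (gkh y Dy).
under eq_integral do rewrite EFinM.
rewrite ge0_integralZl_EFin//; last 2 first.
- by move=> y Dy; rewrite lee_fin h0//; exact: DE.
- exact/measurable_EFinP.
apply: lee_wpmul2l; first by rewrite lee_fin.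
by apply: ge0_subset_integral => //; exact/measurable_EFinP.
Qed.

Lemma ge0_bigcup_integral_le (F : (set T)^nat) (f : T -> \bar R) (B : \bar R) :
  nondecreasing_seq F -> (forall n, measurable (F n)) ->
  measurable_fun (\bigcup_n F n) f -> (forall x, (\bigcup_n F n) x -> (0 <= f x)%E) ->
  (forall n, (\int[mu]_(x in F n) f x <= B)%E) ->
  (\int[mu]_(x in \bigcup_n F n) f x <= B)%E.
Proof.
move=> ndF mF mf f0 fB.
have cvgf := ge0_nondecreasing_set_cvg_integral (mu := mu) ndF mF
  (fun n => measurable_funS (bigcup_measurable (fun k _ => mF k))
    (fun x Fnx => ex_intro2 _ _ n I Fnx) mf)
  (fun n x Fnx => f0 x (ex_intro2 _ _ n I Fnx)).
rewrite -(cvg_lim _ cvgf) //; apply: lime_le; first exact: cvgP cvgf.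
exact: nearW.
Qed.

End integral_bounds.

Section itv_integrals.
Variable R : realType.
Local Notation mu := (@lebesgue_measure R).

Lemma ge0_integral_itvoc_le (a b : R) (B : \bar R) (f : R -> \bar R) : a < b ->
  measurable_fun `]a, b]%classic f -> (forall y, a < y <= b -> (0 <= f y)%E) ->
  (forall c, a < c < b -> (\int[mu]_(y in `[c, b]) f y <= B)%E) ->
  (\int[mu]_(y in `]a, b]) f y <= B)%E.
Proof.
move=> ab mf f0 fB.
pose c (n : nat) := a + (b - a) / n.+2%:R.
have ac n : a < c n by rewrite ltrDl divr_gt0 ?subr_gt0.
have cb n : c n < b.
  by rewrite -ltrBrDl ltr_pdivrMr ?subr_gt0// ltr_pMr ?subr_gt0// ltr1n.
have cU : `]a, b]%classic = \bigcup_n `[c n, b]%classic.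
  apply/seteqP; split => [y|y [n _]]; rewrite /= !in_itv /=; last first.
    by move=> /andP[cy ->]; rewrite (lt_le_trans (ac n)).
  move=> /andP[ay yb]; exists (Num.truncn ((b - a) / (y - a))) => //=.
  rewrite in_itv /= yb andbT -lerBrDl ler_pdivrMr// mulrC -ler_pdivrMr ?subr_gt0//.
  by apply/ltW/(lt_le_trans (truncnS_gt _)); rewrite ler_nat.
rewrite cU; apply: ge0_bigcup_integral_le => [m n mn|n||y|n].
- rewrite subsetEset => y; rewrite /= !in_itv /= => /andP[cmy ->]; rewrite andbT.
  apply: le_trans cmy; rewrite lerD2l ler_pM2l ?subr_gt0// lef_pV2 ?posrE ?ltr0n//.
  by rewrite ler_nat.
- exact: measurable_itv.
- by rewrite -cU.
- by rewrite -cU /= in_itv /=; exact: f0.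
- by apply: fB; rewrite ac cb.
Qed.

Lemma ge0_integral_itvcy_le (a : R) (B : \bar R) (f : R -> \bar R) :
  measurable_fun `[a, +oo[%classic f -> (forall y, a <= y -> (0 <= f y)%E) ->
  (forall c, a < c -> (\int[mu]_(y in `[a, c]) f y <= B)%E) ->
  (\int[mu]_(y in `[a, +oo[) f y <= B)%E.
Proof.
move=> mf f0 fB.
pose c (n : nat) := a + n.+1%:R.
have cU : `[a, +oo[%classic = \bigcup_n `[a, c n]%classic.
  apply/seteqP; split => [y|y [n _]]; rewrite /= !in_itv /= ?andbT; last first.
    by case/andP.
  move=> ay; exists (Num.truncn (y - a)) => //=.
  by rewrite in_itv /= ay -lerBlDl ltW// truncnS_gt.
rewrite cU; apply: ge0_bigcup_integral_le => [m n mn|n||y|n].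
- rewrite subsetEset => y; rewrite /= !in_itv /= => /andP[-> ycm] /=.
  by apply: le_trans ycm _; rewrite lerD2l ler_nat.
- exact: measurable_itv.
- by rewrite -cU.
- by rewrite -cU /= in_itv /= andbT; exact: f0.
- by apply: fB; rewrite ltrDl.
Qed.

Lemma ge0_integral_itvoy_split (g : R -> \bar R) (c e : R) : c <= e ->
  measurable_fun `]c, +oo[%classic g -> (forall y, c < y -> (0 <= g y)%E) ->
  (\int[mu]_(y in `]c, +oo[) g y =
   \int[mu]_(y in `]c, e]) g y + \int[mu]_(y in `]e, +oo[) g y)%E.
Proof.
move=> ce mg g0.
rewrite (@itv_bndbnd_setU _ _ (BRight c) (BRight e) +oo%O) ?bnd_simp//.
apply: ge0_integral_setU => //.
- by rewrite -itv_bndbnd_setU ?bnd_simp.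
- by move=> y; rewrite -itv_bndbnd_setU ?bnd_simp//= in_itv /= andbT; exact: g0.
rewrite disj_set2E; apply/eqP/seteqP; split => y //=.
by rewrite !in_itv /= andbT => -[/andP[_ ye] /(lt_le_trans)/(_ ye)]; rewrite ltxx.
Qed.

End itv_integrals.

Section powR_integrals.
Variable R : realType.
Local Notation mu := (@lebesgue_measure R).

Lemma powR_continuous (p x : R) : 0 < x -> {for x, continuous (fun y : R => y `^ p)}.
Proof.
move=> x0; apply: differentiable_continuous; apply/derivable1_diffP.
by apply: derivable_powR; rewrite in_itv /= x0.
Qed.

Lemma integral_powR_itvcc (p c b : R) : p != -1 -> 0 < c -> c < b ->
  (\int[mu]_(y in `[c, b]) (y `^ p)%:E =
   ((b `^ (p + 1) - c `^ (p + 1)) / (p + 1))%:E)%E.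
Proof.
move=> p1 c0 cb; have p10 : p + 1 != 0 by rewrite addr_eq0.
have b0 : 0 < b := lt_trans c0 cb.
pose F z := (p + 1)^-1 * z `^ (p + 1).
have dF (z : R) : 0 < z -> is_derive z 1 F ((p + 1)^-1 * ((p + 1) * z `^ (p + 1 - 1))).
  by move=> z0; apply: is_deriveZ; exact: is_derive1_powR.
have cF (z : R) : 0 < z -> {for z, continuous F}.
  by move=> z0; apply: continuousM; [exact: cvg_cst|exact: powR_continuous].
rewrite (@continuous_FTC2 _ _ F c b cb).
- by rewrite -EFinB /F -mulrBr mulrC.
- apply/continuous_within_itvP => //; split.
  + by move=> z; rewrite in_itv /= => /andP[cz _]; apply: powR_continuous (lt_trans c0 cz).
  + exact/cvg_at_right_filter/powR_continuous.
  + exact/cvg_at_left_filter/powR_continuous.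
- split.
  + move=> z; rewrite in_itv /= => /andP[cz _].
    by apply: ex_derive; exact: dF (lt_trans c0 cz).
  + exact/cvg_at_right_filter/cF.
  + exact/cvg_at_left_filter/cF.
- move=> z; rewrite in_itv /= => /andP[cz _]; have dFz := dF _ (lt_trans c0 cz).
  by rewrite derive1E derive_val addrK mulKf.
Qed.

Lemma integral_powR_itvoc_le (q b : R) : 0 < q -> 0 < b ->
  (\int[mu]_(y in `]0%R, b]) (y `^ (q - 1))%:E <= (b `^ q / q)%:E)%E.
Proof.
move=> q0 b0; apply: ge0_integral_itvoc_le => //.
- by apply/measurable_EFinP; exact: measurable_funTS (measurable_powR _).
- by move=> y _; rewrite lee_fin powR_ge0.
move=> c /andP[c0 cb]; rewrite integral_powR_itvcc //; last first.
  by rewrite -subr_eq0 opprK subrK gt_eqF.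
by rewrite subrK lee_fin ler_pM2r ?invr_gt0// gerBl powR_ge0.
Qed.

Lemma integral_powR_itvcy_le (q b : R) : 0 < q -> 0 < b ->
  (\int[mu]_(y in `[b, +oo[) (y `^ (- (1 + q)))%:E <= (b `^ (- q) / q)%:E)%E.
Proof.
move=> q0 b0; apply: ge0_integral_itvcy_le.
- by apply/measurable_EFinP; exact: measurable_funTS (measurable_powR _).
- by move=> y _; rewrite lee_fin powR_ge0.
move=> c bc; rewrite integral_powR_itvcc //; last first.
  by rewrite eqr_opp -subr_eq0 addrAC subrr add0r gt_eqF.
have -> : - (1 + q) + 1 = - q by ring.
rewrite invrN mulrN -mulNr opprB lee_fin.
by rewrite ler_pM2r ?invr_gt0// gerBl powR_ge0.
Qed.

End powR_integrals.

Section convex_slope.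
Variable R : realType.

Lemma convex_slope_origin_le (phi : R^o -> R^o) (u v : R) :
  convex_function (`[0%R, +oo[%classic : set R^o) phi ->
  0 < u -> u <= v -> (phi 0 - phi v) / v <= (phi 0 - phi u) / u.
Proof.
move=> cphi u0 uv; have v0 := lt_le_trans u0 uv.
have t1 : u / v <= 1 by rewrite ler_pdivrMr ?mul1r.
have := cphi (Itv01 (divr_ge0 (ltW u0) (ltW v0)) t1) v 0.
rewrite !inE /= !in_itv /= (ltW v0) lexx => /(_ isT isT).
set w := (X in phi X <= _).
have -> : w = u.
  change ((u / v) * v + (1 - u / v) * 0 = u).
  by rewrite mulr0 addr0 divfK ?gt_eqF.
move=> h; have {}h : phi u <= u / v * phi v + (1 - u / v) * phi 0 := h.
have h2 : u / v * (phi 0 - phi v) <= phi 0 - phi u by lra.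
rewrite ler_pdivlMr //; congr (_ <= _): h2; ring.
Qed.

End convex_slope.

Section V1_deficit.
Variables (R : realType) (a : R) (f : R -> R).
Hypothesis hf : V1 a f.

Lemma V1_deficit_ge0 (y : R) : 0 <= y -> 0 <= 1 - f y.
Proof.
have [_ [f0 [_ fmono] _ _ _]] := hf.
by move=> y0; rewrite subr_ge0 -f0 fmono.
Qed.

Lemma V1_deficit_le1 (y : R) : 1 - f y <= 1.
Proof. by have [_ [_ [fge0 _] _ _ _]] := hf; rewrite gerBl fge0. Qed.

Lemma V1_deficit_le_sqr (y : R) : 1 - f y <= y ^+ 2.
Proof.
have [_ [_ _ _ flow _]] := hf.
by have := flow y; rewrite ge_max => /andP[_]; lra.
Qed.

Lemma V1_deficit_homo (y z : R) : 0 <= y -> y <= z -> 1 - f y <= 1 - f z.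
Proof.
have [_ [_ [_ fmono] _ _ _]] := hf.
by move=> y0 yz; rewrite lerD2l lerN2 fmono.
Qed.

Lemma V1_deficit_div_sqr_homo (y z : R) : 0 < y -> y <= z ->
  (1 - f z) / z ^+ 2 <= (1 - f y) / y ^+ 2.
Proof.
have [_ [f0 _ fconv _ _]] := hf.
move=> y0 yz; have z0 := lt_le_trans y0 yz.
have := convex_slope_origin_le (v := z ^+ 2) fconv (exprn_gt0 2 y0).
rewrite /= sqrtr0 f0 !sqrtr_sqr !gtr0_norm//; apply.
by rewrite ler_sqr ?nnegrE ?(ltW y0) ?(ltW z0).
Qed.

Lemma V1_deficit_eq0 (x y : R) : 0 < x -> f x = 1 -> 0 <= y -> f y = 1.
Proof.
move=> x0 fx1 y0; apply/eqP; rewrite eq_le -subr_ge0 V1_deficit_ge0 //= -subr_le0.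
have [yx|xy] := leP y x.
  by have := V1_deficit_homo y0 yx; rewrite fx1 subrr.
have := V1_deficit_div_sqr_homo x0 (ltW xy); rewrite fx1 subrr mul0r.
by rewrite ler_pdivrMr ?mul0r // exprn_gt0 // (lt_trans x0 xy).
Qed.

End V1_deficit.

Lemma split_bound_sum_eq (R : realType) (a d x : R) : 0 < a < 1 -> 0 < d -> 0 < x ->
  let s := d `^ 2^-1 in let y := x * d `^ (- 2^-1) in
  s `^ (2 * (1 - a)) / (2 * (1 - a)) + d * (s `^ (- (2 * a)) / (2 * a)) +
  d / x ^+ 2 * (y `^ (2 * (1 - a)) / (2 * (1 - a))) + y `^ (- (2 * a)) / (2 * a) =
  (d `^ (1 - a) + x `^ (- (2 * a)) * d `^ a) / (2 * a * (1 - a)).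
Proof.
move=> /andP[a0 a1] d0 x0 s y.
have powRE (z e : R) : 0 < z -> z `^ e = expR (e * ln z).
  by move=> z0; rewrite /powR gt_eqF.
have s0 : 0 < s by rewrite powR_gt0.
have y0 : 0 < y by rewrite mulr_gt0 ?powR_gt0.
have lns : ln s = 2^-1 * ln d by rewrite ln_powR.
have lny : ln y = ln x - 2^-1 * ln d by rewrite lnM ?posrE ?powR_gt0// ln_powR mulNr.
have dE : d = expR (ln d) by rewrite lnK.
have x2E : x ^+ 2 = expR (2 * ln x) by rewrite expRM_natl lnK.
have head_eq : s `^ (2 * (1 - a)) = d `^ (1 - a).
  by rewrite !powRE // lns; congr expR; field.
have lower_eq : d * s `^ (- (2 * a)) = d `^ (1 - a).
  by rewrite {1}dE !powRE // lns -expRD; congr expR; field.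
have upper_eq : d / x ^+ 2 * y `^ (2 * (1 - a)) = x `^ (- (2 * a)) * d `^ a.
  by rewrite {1}dE x2E !powRE // lny -expRN -!expRD; congr expR; field.
have tail_eq : y `^ (- (2 * a)) = x `^ (- (2 * a)) * d `^ a.
  by rewrite !powRE // lny -expRD; congr expR; field.
rewrite head_eq tail_eq !mulrA lower_eq upper_eq.
by field; rewrite !gt_eqF ?subr_gt0 ?mulr_gt0.
Qed.

Section cf_integrand.
Variables (R : realType) (a : R) (f : R -> R).
Hypotheses (ha : 0 < a < 1) (hf : V1 a f).
Local Notation mu := (@lebesgue_measure R).
Let g (xi : R) := (1 - f xi) / xi `^ (1 + 2 * a).

Let q1_gt0 : 0 < 2 * (1 - a). Proof. by case/andP: ha => *; lra. Qed.
Let q2_gt0 : 0 < 2 * a. Proof. by case/andP: ha => *; lra. Qed.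

Let measurable_g : measurable_fun setT g.
Proof.
rewrite (_ : g = fun xi => (1 - f xi) * xi `^ (- (1 + 2 * a))); last first.
  by apply/funext => xi; rewrite /g powRN.
apply: measurable_funM; last exact: measurable_powR.
apply: measurable_funB => //; apply: continuous_measurable_fun.
by case: hf => -[].
Qed.

Let g_ge0 (xi : R) : 0 < xi -> 0 <= g xi.
Proof. by move=> xi0; rewrite divr_ge0 ?powR_ge0 ?(V1_deficit_ge0 hf) ?ltW. Qed.

Let g_le_sqr (k xi : R) : 0 < xi -> 1 - f xi <= k * xi ^+ 2 ->
  g xi <= k * xi `^ (2 * (1 - a) - 1).
Proof.
move=> xi0 fk; rewrite /g ler_pdivrMr ?powR_gt0// -mulrA -powRD; last first.
  by apply/implyP => _; rewrite gt_eqF.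
have -> : 2 * (1 - a) - 1 + (1 + 2 * a) = 2%:R by ring.
by rewrite powR_mulrn // ltW.
Qed.

Let g_le_const (k xi : R) : 1 - f xi <= k -> g xi <= k * xi `^ (- (1 + 2 * a)).
Proof. by move=> fk; rewrite powRN ler_wpM2r ?invr_ge0 ?powR_ge0. Qed.

Lemma cf_integral_head_le (s : R) : 0 < s ->
  (\int[mu]_(xi in `]0%R, s]) (g xi)%:E <= (s `^ (2 * (1 - a)) / (2 * (1 - a)))%:E)%E.
Proof.
move=> s0; apply: le_trans (integral_powR_itvoc_le q1_gt0 s0).
rewrite -[X in (_ <= X)%E]mul1e.
apply: ge0_le_integral_scale_subset => //.
- exact: measurable_funTS.
- exact: measurable_funTS (measurable_powR _).
- by move=> xi _; rewrite powR_ge0.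
- move=> xi; rewrite /= in_itv /= => /andP[xi0 _].
  by rewrite g_ge0// g_le_sqr// mul1r (V1_deficit_le_sqr hf).
Qed.

Lemma cf_integral_lower_le (s x : R) : 0 < s -> s <= x ->
  (\int[mu]_(xi in `]s, x]) (g xi)%:E <=
   ((1 - f x) * (s `^ (- (2 * a)) / (2 * a)))%:E)%E.
Proof.
move=> s0 sx.
have dx0 : 0 <= 1 - f x by rewrite (V1_deficit_ge0 hf)// ltW// (lt_le_trans s0 sx).
rewrite EFinM; apply: le_trans (lee_wpmul2l _ (integral_powR_itvcy_le q2_gt0 s0)).
- apply: ge0_le_integral_scale_subset => //.
  + by move=> xi; rewrite /= !in_itv /= andbT => /andP[/ltW].
  + exact: measurable_funTS.
  + exact: measurable_funTS (measurable_powR _).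
  + by move=> xi _; rewrite powR_ge0.
  + move=> xi; rewrite /= in_itv /= => /andP[sxi xix]; have xi0 := lt_trans s0 sxi.
    by rewrite g_ge0// g_le_const// (V1_deficit_homo hf)// ltW.
- by rewrite lee_fin.
Qed.

Lemma cf_integral_upper_le (x y : R) : 0 < x -> x <= y ->
  (\int[mu]_(xi in `]x, y]) (g xi)%:E <=
   ((1 - f x) / x ^+ 2 * (y `^ (2 * (1 - a)) / (2 * (1 - a))))%:E)%E.
Proof.
move=> x0 xy.
have k0 : 0 <= (1 - f x) / x ^+ 2 by rewrite divr_ge0 ?sqr_ge0 ?(V1_deficit_ge0 hf) ?ltW.
have y0 : 0 < y := lt_le_trans x0 xy.
rewrite EFinM; apply: le_trans (lee_wpmul2l _ (integral_powR_itvoc_le q1_gt0 y0)).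
- apply: ge0_le_integral_scale_subset => //.
  + by move=> xi; rewrite /= !in_itv /= => /andP[/(lt_trans x0) -> ->].
  + exact: measurable_funTS.
  + exact: measurable_funTS (measurable_powR _).
  + by move=> xi _; rewrite powR_ge0.
  + move=> xi; rewrite /= in_itv /= => /andP[xxi _]; have xi0 := lt_trans x0 xxi.
    rewrite g_ge0// g_le_sqr// -ler_pdivrMr ?exprn_gt0//.
    exact: (V1_deficit_div_sqr_homo hf) (ltW xxi).
- by rewrite lee_fin.
Qed.

Lemma cf_integral_tail_le (y : R) : 0 < y ->
  (\int[mu]_(xi in `]y, +oo[) (g xi)%:E <= (y `^ (- (2 * a)) / (2 * a))%:E)%E.
Proof.
move=> y0; apply: le_trans (integral_powR_itvcy_le q2_gt0 y0).
rewrite -[X in (_ <= X)%E]mul1e.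
apply: ge0_le_integral_scale_subset => //.
- by move=> xi; rewrite /= !in_itv /= !andbT => /ltW.
- exact: measurable_funTS.
- exact: measurable_funTS (measurable_powR _).
- by move=> xi _; rewrite powR_ge0.
- move=> xi; rewrite /= in_itv /= andbT => yxi; have xi0 := lt_trans y0 yxi.
  by rewrite g_ge0// g_le_const// (V1_deficit_le1 hf).
Qed.

Lemma cf_integral_eq0 (x : R) : 0 < x -> f x = 1 ->
  (\int[mu]_(xi in `]0%R, +oo[) (g xi)%:E = 0)%E.
Proof.
move=> x0 fx1; apply: integral0_eq => xi; rewrite /= in_itv /= andbT => xi0.
by rewrite /g (V1_deficit_eq0 hf x0 fx1 (ltW xi0)) subrr mul0r.
Qed.

Lemma cf_integral_le (x : R) : 0 < x ->
  (\int[mu]_(xi in `]0%R, +oo[) (g xi)%:E <=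
   (((1 - f x) `^ (1 - a) + x `^ (- (2 * a)) * (1 - f x) `^ a)
      / (2 * a * (1 - a)))%:E)%E.
Proof.
move=> x0; have /andP[a0 a1] := ha.
have [fx1|dpos] : f x = 1 \/ 0 < 1 - f x.
  have := V1_deficit_ge0 hf (ltW x0).
  by rewrite le_eqVlt => /predU1P[?|]; [left; lra|right].
  rewrite (cf_integral_eq0 x0 fx1) lee_fin divr_ge0 ?addr_ge0 ?mulr_ge0 ?powR_ge0 //; lra.
set d := 1 - f x in dpos *; set s := d `^ 2^-1; set y := x * d `^ (- 2^-1).
have s0 : 0 < s by rewrite powR_gt0.
have y0 : 0 < y by rewrite mulr_gt0 ?powR_gt0.
have sx : s <= x.
  have -> : x = (x ^+ 2) `^ 2^-1 by rewrite powR12_sqrt ?sqr_ge0// sqrtr_sqr gtr0_norm.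
  by apply: ge0_ler_powR; rewrite ?nnegrE ?sqr_ge0 ?(V1_deficit_le_sqr hf) ?ltW.
have xy : x <= y.
  rewrite /y ler_peMr ?(ltW x0)// powRN invf_ge1 ?powR_gt0// -[leRHS](powRr0 d).
  by apply: ger_powR; rewrite ?dpos ?(V1_deficit_le1 hf) ?invr_ge0.
have mg : measurable_fun setT (EFin \o g) by exact/measurable_EFinP.
have g0 (c : R) : 0 <= c -> forall xi, c < xi -> (0 <= (EFin \o g) xi)%E.
  by move=> c0 xi cxi; rewrite lee_fin g_ge0// (le_lt_trans c0).
change (\int[mu]_(xi in `]0%R, +oo[) (EFin \o g) xi <=
  ((d `^ (1 - a) + x `^ (- (2 * a)) * d `^ a) / (2 * a * (1 - a)))%:E)%E.
rewrite (ge0_integral_itvoy_split (ltW s0) (measurable_funTS mg) (g0 _ (lexx 0))).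
rewrite (ge0_integral_itvoy_split sx (measurable_funTS mg) (g0 _ (ltW s0))).
rewrite (ge0_integral_itvoy_split xy (measurable_funTS mg) (g0 _ (ltW x0))).
apply: le_trans (leeD (cf_integral_head_le s0) (leeD (cf_integral_lower_le s0 sx)
  (leeD (cf_integral_upper_le x0 xy) (cf_integral_tail_le y0)))) _.
by rewrite -!EFinD -split_bound_sum_eq// !addrA.
Qed.

End cf_integrand.

Lemma Gamma_ge0 (R : realType) (s : R) : 0 <= Gamma s.
Proof.
rewrite /Gamma fine_ge0// integral_ge0// => t _.
by rewrite lee_fin mulr_ge0 ?powR_ge0 ?expR_ge0.
Qed.

Lemma c1_ge0 (R : realType) (a : R) : 0 <= c1 a.
Proof. by rewrite /c1 divr_ge0 ?mulr_ge0 ?powR_ge0 ?sqrtr_ge0 ?Gamma_ge0. Qed.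

Lemma ge0_ger_powR (R : realType) (d m e : R) : 0 <= d <= 1 -> 0 < m -> m <= e ->
  d `^ e <= d `^ m.
Proof.
move=> /andP[d0 d1] m0 me; have [->|dpos] := eqVneq d 0.
  by rewrite !powR0 ?gt_eqF// (lt_le_trans m0).
by apply: ger_powR => //; rewrite lt_neqAle eq_sym dpos d0.
Qed.

Lemma powR_sum_le_min (R : realType) (a d z : R) : 0 < a < 1 -> 0 <= d <= 1 ->
  0 <= z -> d `^ (1 - a) + z * d `^ a <= d `^ (Num.min (1 - a) a) * (1 + z).
Proof.
move=> /andP[a0 a1] d01 z0.
have m0 : 0 < Num.min (1 - a) a by rewrite lt_min subr_gt0 a1 a0.
rewrite mulrDr mulr1 [_ * z]mulrC lerD ?ler_wpM2l //;
  by apply: ge0_ger_powR; rewrite ?ge_min ?lexx ?orbT.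
Qed.

Theorem mainTheorem4 (R : realType) (a : R) (ha : 0 < a < 1)
  (f : R -> R) (hf : V1 a f) (x : R) (hx : 0 < x) :
  (cf a f <=
   ((1 + 2 * a) / (3 * (1 - a)) * c1 a
     * (1 - f x) `^ (Num.min (1 - a) a) * (1 + x `^ (- (2 * a))))%:E)%E.
Proof.
have /andP[a0 a1] := ha.
rewrite /cf; apply: le_trans (lee_wpmul2l _ (cf_integral_le ha hf hx)) _.
  by rewrite lee_fin mulr_ge0 ?c1_ge0 // divr_ge0 //; nra.
rewrite -EFinM lee_fin; set d := 1 - f x; set z := x `^ (- (2 * a)).
have -> : 2 * a * (1 + 2 * a) / 3 * c1 a * ((d `^ (1 - a) + z * d `^ a) / (2 * a * (1 - a)))
    = (1 + 2 * a) / (3 * (1 - a)) * c1 a * (d `^ (1 - a) + z * d `^ a).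
  by field; rewrite !gt_eqF ?subr_gt0.
rewrite -[leRHS]mulrA; apply: ler_wpM2l.
  by rewrite mulr_ge0 ?c1_ge0 ?divr_ge0 ?mulr_ge0 //; lra.
apply: powR_sum_le_min; rewrite ?powR_ge0 //.
by rewrite (V1_deficit_ge0 hf) ?(V1_deficit_le1 hf) ?ltW.
Qed.
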